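(* Let $A$ and $B$ be hyperbolic elements in $\mathrm{Sp}(1,1)$ having a common fixed point on $\partial\mathbf H^1_{\mathbb H}$. Then (the images of) $A$ and $B$ form a strongly doubly reversible pair in $\mathrm{PSp}(1,1)$ if and only if $A$ and $B$ have the same fixed points.
   Context: $\mathrm{Sp}(1,1)$ is the group of $2\times 2$ quaternionic matrices preserving the Hermitian form $\langle \mathbf z,\mathbf w\rangle=\bar w_2 z_1+\bar w_1 z_2$ on the right $\mathbb H$-vector space $\mathbb H^2$, $\mathrm{PSp}(1,1)=\mathrm{Sp}(1,1)/\{\pm I\}$, and $\partial\mathbf H^1_{\mathbb H}$ is the set of right quaternionic lines of nonzero null vectors. An element is hyperbolic if it has exactly two fixed points on $\partial\mathbf H^1_{\mathbb H}$. A pair $(g_1,g_2)$ in $\mathrm{PSp}(1,1)$ is strongly doubly reversible if there is $g\in\mathrm{PSp}(1,1)$ with $g^2=1$, $g g_1 g^{-1}=g_1^{-1}$ and $g g_2 g^{-1}=g_2^{-1}$. *)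

From HB Require Import structures.
From mathcomp Require Import all_boot all_order all_algebra.
From mathcomp Require Import reals.
Set Implicit Arguments. Unset Strict Implicit. Unset Printing Implicit Defensive.
Import Order.TTheory GRing.Theory Num.Theory.
Local Open Scope ring_scope.

Section Quaternions.
Variable R : realType.

(** Real quaternions q0 + q1 i + q2 j + q3 k, with i^2=j^2=k^2=ijk=-1. *)
Record quat := Quat { q0 : R; q1 : R; q2 : R; q3 : R }.

Definition qzero : quat := Quat 0 0 0 0.
Definition qone : quat := Quat 1 0 0 0.
Definition qadd (a b : quat) : quat :=
  Quat (q0 a + q0 b) (q1 a + q1 b) (q2 a + q2 b) (q3 a + q3 b).
Definition qopp (a : quat) : quat := Quat (- q0 a) (- q1 a) (- q2 a) (- q3 a).
Definition qmul (a b : quat) : quat :=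
  Quat (q0 a * q0 b - q1 a * q1 b - q2 a * q2 b - q3 a * q3 b)
       (q0 a * q1 b + q1 a * q0 b + q2 a * q3 b - q3 a * q2 b)
       (q0 a * q2 b - q1 a * q3 b + q2 a * q0 b + q3 a * q1 b)
       (q0 a * q3 b + q1 a * q2 b - q2 a * q1 b + q3 a * q0 b).
Definition qconj (a : quat) : quat := Quat (q0 a) (- q1 a) (- q2 a) (- q3 a).

Definition hvec := (quat * quat)%type.
Definition vzero : hvec := (qzero, qzero).
Definition vscale (z : hvec) (l : quat) : hvec := (qmul z.1 l, qmul z.2 l).

Record hmat := HMat { m11 : quat; m12 : quat; m21 : quat; m22 : quat }.
Definition mone : hmat := HMat qone qzero qzero qone.
Definition mopp (A : hmat) : hmat :=
  HMat (qopp (m11 A)) (qopp (m12 A)) (qopp (m21 A)) (qopp (m22 A)).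
Definition mmul (A B : hmat) : hmat :=
  HMat (qadd (qmul (m11 A) (m11 B)) (qmul (m12 A) (m21 B)))
       (qadd (qmul (m11 A) (m12 B)) (qmul (m12 A) (m22 B)))
       (qadd (qmul (m21 A) (m11 B)) (qmul (m22 A) (m21 B)))
       (qadd (qmul (m21 A) (m12 B)) (qmul (m22 A) (m22 B))).
Definition mact (A : hmat) (z : hvec) : hvec :=
  (qadd (qmul (m11 A) z.1) (qmul (m12 A) z.2),
   qadd (qmul (m21 A) z.1) (qmul (m22 A) z.2)).

Definition is_inv (A B : hmat) : Prop := mmul A B = mone /\ mmul B A = mone.

Definition hform (z w : hvec) : quat :=
  qadd (qmul (qconj w.2) z.1) (qmul (qconj w.1) z.2).

Definition Sp11 (A : hmat) : Prop :=
  (exists B, is_inv A B) /\ forall z w, hform (mact A z) (mact A w) = hform z w.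

(** Equality in PSp(1,1) = Sp(1,1)/{+-I}. *)
Definition pm_eq (A B : hmat) : Prop := A = B \/ A = mopp B.

(** Nonzero null vectors; a point of the boundary is the right line z.H. *)
Definition null_nz (z : hvec) : Prop := z <> vzero /\ hform z z = qzero.
Definition same_line (z w : hvec) : Prop := exists mu : quat, w = vscale z mu.

(** z represents a boundary point fixed by A (A z lies on the line z.H).
    This condition depends only on the line z.H. *)
Definition fixes_bd (A : hmat) (z : hvec) : Prop :=
  null_nz z /\ exists l : quat, mact A z = vscale z l.

Definition hyperbolic (A : hmat) : Prop :=
  exists z1 z2, fixes_bd A z1 /\ fixes_bd A z2 /\ ~ same_line z1 z2 /\
    forall z, fixes_bd A z -> same_line z1 z \/ same_line z2 z.

Definition strongly_doubly_reversible (A B : hmat) : Prop :=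
  exists G Gi Ai Bi, Sp11 G /\ is_inv G Gi /\ is_inv A Ai /\ is_inv B Bi /\
    pm_eq (mmul G G) mone /\
    pm_eq (mmul (mmul G A) Gi) Ai /\
    pm_eq (mmul (mmul G B) Gi) Bi.

End Quaternions.

From HB Require Import structures.
From mathcomp Require Import all_boot all_order all_algebra.
From mathcomp Require Import reals ring lra.
Set Implicit Arguments. Unset Strict Implicit. Unset Printing Implicit Defensive.
Import Order.TTheory GRing.Theory Num.Theory.
Local Open Scope ring_scope.

(** Write [z1], [z2] for the fixed points of a hyperbolic [A], scaled so that
   <z1, z2> = 1; then [A z1 = z1 l] and [A z2 = z2 k] with [conj(k) l = 1].

   If [A] and [B] have the same fixed points, choose a nonzero pure quaternion
   [x] with [x l = conj(l) x] and [x b = conj(b) x] ([b] the eigenvalue of [B]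
   at [z1]): this only asks [x] to be orthogonal to two vectors of R^3.  The
   matrix [G] with [G z1 = z2 x] and [G z2 = - z1 x^-1] lies in Sp(1,1),
   satisfies [G^2 = -1], and conjugates [A] and [B] to their inverses.

   Conversely, if [G] reverses [A] and [B], it maps fixed points of [A] to
   fixed points of [A] and turns the norm |l| of the eigenvalue at [p] into
   |l|^-1 at [G p].  At a fixed point [p] of a hyperbolic element |l| <> 1:
   otherwise, with [q] the other fixed point scaled so that <p, q> = 1, the
   eigenvalue at [q] is [l] too, and [p + q y] is a third fixed point for any
   nonzero pure [y] commuting with [l].  Hence [G] moves the common fixed
   point [z] off its line, and [z], [G z] are the two fixed points of both
   [A] and [B]. *)

Lemma left_kernel_neq0 (F : fieldType) m n (M : 'M[F]_(m, n)) :
  (n < m)%N -> exists2 u : 'rV_m, u != 0 & u *m M = 0.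
Proof.
move=> lt_nm; have : kermx M != 0.
  rewrite -mxrank_eq0 mxrank_ker -lt0n subn_gt0.
  exact: leq_ltn_trans (rank_leq_col M) lt_nm.
by case/rowV0Pn => u /sub_kermxP uM u0; exists u.
Qed.

Section Sp11.
Variable R : realType.
Local Notation quat := (quat R).

(** * Quaternions *)

Definition quat_tuple (q : quat) := (q0 q, q1 q, q2 q, q3 q).
Definition tuple_quat (t : R * R * R * R) : quat :=
  let: (a, b, c, d) := t in Quat a b c d.
Lemma quat_tupleK : cancel quat_tuple tuple_quat. Proof. by case. Qed.
HB.instance Definition _ := Choice.copy quat (can_type quat_tupleK).

Lemma quatP (a b : quat) :
  q0 a = q0 b -> q1 a = q1 b -> q2 a = q2 b -> q3 a = q3 b -> a = b.
Proof. by case: a; case: b => /= ? ? ? ? ? ? ? ? -> -> -> ->. Qed.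

Ltac quat_ring := repeat match goal with x : quat |- _ => destruct x end;
  apply: quatP; rewrite /=; ring.

Lemma qaddA : associative (@qadd R). Proof. move=> *; quat_ring. Qed.
Lemma qaddC : commutative (@qadd R). Proof. move=> *; quat_ring. Qed.
Lemma qadd0 : left_id (@qzero R) (@qadd R). Proof. move=> *; quat_ring. Qed.
Lemma qaddN : left_inverse (@qzero R) (@qopp R) (@qadd R).
Proof. move=> *; quat_ring. Qed.
HB.instance Definition _ := GRing.isZmodule.Build quat qaddA qaddC qadd0 qaddN.

Lemma qmulA : associative (@qmul R). Proof. move=> *; quat_ring. Qed.
Lemma qmul1 : left_id (@qone R) (@qmul R). Proof. move=> *; quat_ring. Qed.
Lemma qmulr1 : right_id (@qone R) (@qmul R). Proof. move=> *; quat_ring. Qed.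
Lemma qmulDl : left_distributive (@qmul R) (@qadd R). Proof. move=> *; quat_ring. Qed.
Lemma qmulDr : right_distributive (@qmul R) (@qadd R). Proof. move=> *; quat_ring. Qed.
Lemma qone_neq0 : qone R != 0.
Proof. by apply/eqP => /(congr1 (@q0 R)) /= /eqP; rewrite oner_eq0. Qed.
HB.instance Definition _ :=
  GRing.Zmodule_isNzRing.Build quat qmulA qmul1 qmulr1 qmulDl qmulDr qone_neq0.

Definition qnorm (q : quat) : R := q0 q ^+ 2 + q1 q ^+ 2 + q2 q ^+ 2 + q3 q ^+ 2.
Definition qinv (q : quat) : quat :=
  Quat (q0 q / qnorm q) (- q1 q / qnorm q) (- q2 q / qnorm q) (- q3 q / qnorm q).

Lemma qnorm_eq0 (q : quat) : (qnorm q == 0) = (q == 0).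
Proof.
case: q => a b c d; rewrite /qnorm /=; apply/eqP/eqP => [H|[-> -> -> ->]].
  by apply: quatP => /=; nra.
by rewrite expr0n /= !addr0.
Qed.

Lemma qmulV : {in [pred q | q != 0], left_inverse 1 qinv *%R}.
Proof.
move=> [a b c d]; rewrite inE -qnorm_eq0 /qnorm /= => nq.
change (qmul (qinv (Quat a b c d)) (Quat a b c d) = qone R).
by apply: quatP; rewrite /= /qnorm /=; field.
Qed.
Lemma qmulrV : {in [pred q | q != 0], right_inverse 1 qinv *%R}.
Proof.
move=> [a b c d]; rewrite inE -qnorm_eq0 /qnorm /= => nq.
change (qmul (Quat a b c d) (qinv (Quat a b c d)) = qone R).
by apply: quatP; rewrite /= /qnorm /=; field.
Qed.
Lemma qunitP (x y : quat) : y * x = 1 /\ x * y = 1 -> x != 0.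
Proof. by case=> _; apply: contra_eqN => /eqP ->; rewrite mul0r eq_sym oner_eq0. Qed.
Lemma qinv0 : {in [predC [pred q | q != 0]], qinv =1 id}.
Proof.
by move=> q; rewrite !inE negbK => /eqP ->; apply: quatP; rewrite /= ?oppr0 mul0r.
Qed.
HB.instance Definition _ := GRing.NzRing_hasMulInverse.Build quat qmulV qmulrV qunitP qinv0.

Lemma qunitE (q : quat) : (q \is a GRing.unit) = (q != 0). Proof. by []. Qed.

Lemma qmulI (c a b : quat) : c != 0 -> c * a = c * b -> a = b.
Proof. by move=> c0; apply: mulrI; exact: c0. Qed.

Lemma qconjM (a b : quat) : qconj (a * b) = qconj b * qconj a. Proof. quat_ring. Qed.
Lemma qconjK (a : quat) : qconj (qconj a) = a. Proof. quat_ring. Qed.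
Lemma qconj0 : qconj 0 = 0 :> quat. Proof. by apply: quatP; rewrite /= ?oppr0. Qed.
Lemma qconj1 : qconj 1 = 1 :> quat. Proof. by apply: quatP; rewrite /= ?oppr0. Qed.
Lemma qconjN (a : quat) : qconj (- a) = - qconj a. Proof. quat_ring. Qed.

Lemma qconj_eq0 (a : quat) : (qconj a == 0) = (a == 0).
Proof.
by apply/eqP/eqP => [ca0|->]; [rewrite -[a]qconjK ca0|]; rewrite qconj0.
Qed.

Lemma qconjV (a : quat) : qconj a^-1 = (qconj a)^-1.
Proof.
have [->|a0] := eqVneq a 0; first by rewrite invr0 qconj0 invr0.
have ca : qconj a \is a GRing.unit by rewrite qunitE qconj_eq0.
by apply: (mulIr ca); rewrite -qconjM mulrV // qconj1 mulVr.
Qed.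

Lemma qnormM (a b : quat) : qnorm (a * b) = qnorm a * qnorm b.
Proof. by case: a; case: b => *; rewrite /qnorm /=; ring. Qed.
Lemma qnorm_ge0 (a : quat) : 0 <= qnorm a.
Proof. by case: a => *; rewrite /qnorm /=; nra. Qed.
Lemma qnorm1 : qnorm 1 = 1.
Proof. by rewrite /qnorm /= expr1n expr0n /= !addr0. Qed.
Lemma qnormV (a : quat) : qnorm a^-1 = (qnorm a)^-1.
Proof.
have [->|a0] := eqVneq a 0; first by rewrite invr0 /qnorm /= expr0n /= !addr0 invr0.
apply: (mulfI (_ : qnorm a != 0)); first by rewrite qnorm_eq0.
by rewrite -qnormM mulrV // qnorm1 mulfV // qnorm_eq0.
Qed.

Lemma qmulf_neq0 (a b : quat) : a != 0 -> b != 0 -> a * b != 0.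
Proof. by rewrite -!qnorm_eq0 qnormM; exact: mulf_neq0. Qed.

Lemma qnorm_conjg (mu l : quat) : mu != 0 -> qnorm (mu^-1 * l * mu) = qnorm l.
Proof.
by move=> mu0; rewrite !qnormM qnormV mulrC mulrA mulfV ?mul1r // qnorm_eq0.
Qed.

Lemma qnorm1_mul_qconj (q : quat) : qnorm q = 1 -> q * qconj q = 1.
Proof.
case: q => a b c d; rewrite /qnorm /= => n1.
change (qmul (Quat a b c d) (qconj (Quat a b c d)) = qone R).
by apply: quatP; rewrite /= -?n1; ring.
Qed.

Definition pure (q : quat) := qconj q = - q.

Lemma exists_pure_commuting (l : quat) : exists y, [/\ y != 0, pure y & y * l = l * y].
Proof.
case: l => a b c d.
have [im0|im_neq0] := eqVneq (Quat 0 b c d) 0.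
  move: im0 => /(congr1 (fun q => [:: q1 q; q2 q; q3 q])) [-> -> ->].
  exists (Quat 0 1 0 0); split.
  - by apply/eqP => /(congr1 (@q1 R)) /= /eqP; rewrite oner_eq0.
  - by apply: quatP; rewrite /= ?oppr0.
  - quat_ring.
exists (Quat 0 b c d); split; [exact: im_neq0 | by apply: quatP; rewrite /= ?oppr0 | quat_ring].
Qed.

Lemma exists_pure_reversing (l b : quat) :
  exists x, [/\ x != 0, pure x, x * l = qconj l * x & x * b = qconj b * x].
Proof.
pose M := \matrix_(i < 3, j < 2)
  nth 0 (nth [::] [:: [:: q1 l; q2 l; q3 l]; [:: q1 b; q2 b; q3 b]] j) i.
have [u u0 uM] := left_kernel_neq0 M isT.
have uM0 j : (u *m M) 0 j = 0 by rewrite uM mxE.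
move: (uM0 0) (uM0 1); rewrite !mxE !big_ord_recl !big_ord0 !mxE /= !addr0.
set x := u 0 ord0; set y := u 0 (lift _ _); set z := u 0 (lift _ (lift _ _)).
move=> ortho_l ortho_b; exists (Quat 0 x y z); clear uM uM0 M; split.
- apply: contra_neq u0 => /(congr1 (fun q => [:: q1 q; q2 q; q3 q])) [x0 y0 z0].
  apply/rowP => i; rewrite !mxE; case: i => [[|[|[|//]]] Hi];
    [rewrite -x0 | rewrite -y0 | rewrite -z0]; congr (u 0 _); exact: val_inj.
- by apply: quatP; rewrite /= ?oppr0.
(* A pure quaternion orthogonal to the imaginary part of [l] anticommutes with it. *)
- by case: l ortho_l => a b1 c d /= ortho_l; apply: quatP => /=; lra.
- by case: b ortho_b => a b1 c d /= ortho_b; apply: quatP => /=; lra.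
Qed.

Lemma reversing_inv (x l : quat) :
  x != 0 -> l != 0 -> x * l = qconj l * x -> x^-1 * (qconj l)^-1 * x = l^-1.
Proof.
move=> x0 l0 xl; have cl0 : qconj l != 0 by rewrite qconj_eq0.
suff e : (qconj l)^-1 * x = x * l^-1 by rewrite -mulrA e mulKr.
by apply: (qmulI cl0); rewrite mulVKr // mulrA -xl mulrK.
Qed.

(** * The Hermitian space H^2 *)

Local Notation hvec := (hvec R).
Local Notation hmat := (hmat R).

Lemma vscaleE (z : hvec) a : vscale z a = (z.1 * a, z.2 * a). Proof. by []. Qed.
Lemma hformE (z w : hvec) : hform z w = qconj w.2 * z.1 + qconj w.1 * z.2.
Proof. by []. Qed.

Ltac hvec_ring := repeat match goal with
  | x : hvec |- _ => destruct x
  | x : hmat |- _ => destruct x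
  | x : (_ * _)%type |- _ => destruct x end;
  rewrite /vscale /mact /mmul /hform /mone /mopp /=; try congr (_, _); quat_ring.

Lemma vscaleA (z : hvec) a b : vscale (vscale z a) b = vscale z (a * b).
Proof. hvec_ring. Qed.
Lemma vscale1 (z : hvec) : vscale z 1 = z. Proof. hvec_ring. Qed.
Lemma vscale0 (z : hvec) : vscale z 0 = 0. Proof. hvec_ring. Qed.
Lemma vscaleDl (u v : hvec) a : vscale (u + v) a = vscale u a + vscale v a.
Proof. hvec_ring. Qed.

Lemma mactD (M : hmat) u v : mact M (u + v) = mact M u + mact M v.
Proof. hvec_ring. Qed.
Lemma mact_vscale (M : hmat) u a : mact M (vscale u a) = vscale (mact M u) a.
Proof. hvec_ring. Qed.
Lemma mact_mmul (M N : hmat) u : mact (mmul M N) u = mact M (mact N u).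
Proof. hvec_ring. Qed.
Lemma mact_mone u : mact (mone R) u = u. Proof. hvec_ring. Qed.
Lemma mact_mopp (M : hmat) u : mact (mopp M) u = vscale (mact M u) (-1).
Proof. hvec_ring. Qed.
Lemma mact0 (M : hmat) : mact M 0 = 0. Proof. hvec_ring. Qed.

Lemma hformDl (u v w : hvec) : hform (u + v) w = hform u w + hform v w.
Proof. hvec_ring. Qed.
Lemma hformDr (u v w : hvec) : hform w (u + v) = hform w u + hform w v.
Proof. hvec_ring. Qed.
Lemma hform_vscalel (u w : hvec) a : hform (vscale u a) w = hform u w * a.
Proof. hvec_ring. Qed.
Lemma hform_vscaler (u w : hvec) a : hform u (vscale w a) = qconj a * hform u w.
Proof. hvec_ring. Qed.
Lemma hform_sym (u w : hvec) : hform w u = qconj (hform u w).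
Proof. hvec_ring. Qed.
Lemma hform0l (w : hvec) : hform 0 w = 0. Proof. hvec_ring. Qed.
Lemma hformNl (u w : hvec) : hform (- u) w = - hform u w. Proof. hvec_ring. Qed.

Lemma mact_col1 (M : hmat) : mact M (1, 0) = (m11 M, m21 M). Proof. hvec_ring. Qed.
Lemma mact_col2 (M : hmat) : mact M (0, 1) = (m12 M, m22 M). Proof. hvec_ring. Qed.

Lemma hmatP (M N : hmat) : (forall u, mact M u = mact N u) -> M = N.
Proof.
case: M N => [? ? ? ?] [? ? ? ?] eMN; move: (eMN (1, 0)) (eMN (0, 1)).
by rewrite !mact_col1 !mact_col2 /= => -[-> ->] [-> ->].
Qed.

Lemma vscale_inj (z : hvec) a b : z <> 0 -> vscale z a = vscale z b -> a = b.
Proof.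
case: z => z1 z2 z0; rewrite !vscaleE => e.
move: (congr1 fst e) (congr1 snd e) => /= e1 e2.
have [z1_0|z1_0] := eqVneq z1 0; last exact: qmulI z1_0 e1.
by apply: (mulrI (_ : z2 \is a GRing.unit) e2); apply: contra_not_neq z0 => ->; rewrite z1_0.
Qed.

Lemma same_line_trans (z w u : hvec) : same_line z w -> same_line w u -> same_line z u.
Proof. by move=> [a ->] [b ->]; exists (a * b); rewrite vscaleA. Qed.

Lemma same_line_sym (z w : hvec) : w <> 0 -> same_line z w -> same_line w z.
Proof.
move=> w0 [a ew]; have a0 : a != 0 by apply: contra_not_neq w0 => a0; rewrite ew a0 vscale0.
by exists a^-1; rewrite ew vscaleA mulrV // vscale1.
Qed.

Lemma same_line_hform (p u : hvec) : hform p p = 0 -> same_line p u -> hform u p = 0.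
Proof. by move=> pp [a ->]; rewrite hform_vscalel pp mul0r. Qed.

Lemma null_orthogonal_same_line (z r : hvec) : null_nz z -> hform r z = 0 -> same_line z r.
Proof.
case: z r => [a1 a2] [b1 b2] [z0 null]; rewrite hformE /= => /eqP; rewrite addr_eq0 => /eqP orth.
move/eqP: null; rewrite hformE /= addr_eq0 => /eqP null.
have [a2_0|a2_0] := eqVneq a2 0.
  have a1_0 : a1 != 0 by apply: contra_not_neq z0 => ->; rewrite a2_0.
  have b2_0 : b2 = 0.
    apply: (@qmulI (qconj a1)); first by rewrite qconj_eq0.
    by apply/eqP; rewrite mulr0 -oppr_eq0 -orth a2_0 qconj0 mul0r.
  by exists (a1^-1 * b1); rewrite vscaleE /= a2_0 b2_0 mul0r mulVKr.
exists (a2^-1 * b2); rewrite vscaleE /=; congr (_, _); last by rewrite mulVKr.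
apply: (@qmulI (qconj a2)); first by rewrite qconj_eq0.
by rewrite orth !mulrA null !mulNr mulrK.
Qed.

Definition form_preserving (M : hmat) : Prop :=
  forall z w, hform (mact M z) (mact M w) = hform z w.

(* When <z1, z2> = 1 and z1, z2 are null, every u is z1 <u, z2> + z2 <u, z1>,
   so this matrix sends z1 to p1 and z2 to p2. *)
Definition frame_mx (z1 z2 p1 p2 : hvec) : hmat :=
  HMat (p1.1 * qconj z2.2 + p2.1 * qconj z1.2) (p1.1 * qconj z2.1 + p2.1 * qconj z1.1)
       (p1.2 * qconj z2.2 + p2.2 * qconj z1.2) (p1.2 * qconj z2.1 + p2.2 * qconj z1.1).

Lemma mact_frame_mx (z1 z2 p1 p2 u : hvec) :
  mact (frame_mx z1 z2 p1 p2) u = vscale p1 (hform u z2) + vscale p2 (hform u z1).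
Proof. rewrite /frame_mx; hvec_ring. Qed.

Section NullFrame.
Variables z1 z2 : hvec.
Hypotheses (z1_null : hform z1 z1 = 0) (z2_null : hform z2 z2 = 0) (z12 : hform z1 z2 = 1).

Lemma frame_z21 : hform z2 z1 = 1.
Proof. by rewrite hform_sym z12 qconj1. Qed.

Lemma frame_z1_neq0 : z1 <> 0.
Proof. by move=> z1_0; move: z12; rewrite z1_0 hform0l => /eqP; rewrite eq_sym oner_eq0. Qed.

Lemma frame_decomp u : u = vscale z1 (hform u z2) + vscale z2 (hform u z1).
Proof.
set v := _ + _.
have uv_z1 : hform (u - v) z1 = 0.
  by rewrite hformDl hformNl hformDl !hform_vscalel z1_null frame_z21 mul0r add0r mul1r subrr.
have uv_z2 : hform (u - v) z2 = 0.
  by rewrite hformDl hformNl hformDl !hform_vscalel z2_null z12 mul0r addr0 mul1r subrr.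
have [mu e] := null_orthogonal_same_line (conj frame_z1_neq0 z1_null) uv_z1.
move: uv_z2; rewrite e hform_vscalel z12 mul1r => mu0.
by apply/eqP; rewrite -subr_eq0 e mu0 vscale0.
Qed.

Lemma frame_mx_ext (M N : hmat) : mact M z1 = mact N z1 -> mact M z2 = mact N z2 -> M = N.
Proof. by move=> e1 e2; apply: hmatP => u; rewrite [u]frame_decomp !mactD !mact_vscale e1 e2. Qed.

Lemma frame_form_preserving (M : hmat) :
  hform (mact M z1) (mact M z1) = 0 -> hform (mact M z2) (mact M z2) = 0 ->
  hform (mact M z1) (mact M z2) = 1 -> form_preserving M.
Proof.
move=> m11 m22 m12 u v; rewrite [u]frame_decomp [v]frame_decomp.
rewrite !mactD !mact_vscale !hformDl !hformDr !hform_vscalel !hform_vscaler.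
by rewrite [hform (mact M z2) _]hform_sym m11 m22 m12 z1_null z2_null z12 frame_z21 qconj1.
Qed.

Lemma frame_mx_z1 p1 p2 : mact (frame_mx z1 z2 p1 p2) z1 = p1.
Proof. by rewrite mact_frame_mx z12 z1_null vscale1 vscale0 addr0. Qed.

Lemma frame_mx_z2 p1 p2 : mact (frame_mx z1 z2 p1 p2) z2 = p2.
Proof. by rewrite mact_frame_mx frame_z21 z2_null vscale1 vscale0 add0r. Qed.

End NullFrame.

Lemma mact_neq0 (M N : hmat) z : mmul N M = mone R -> z <> 0 -> mact M z <> 0.
Proof. by move=> NM z0 Mz0; apply: z0; rewrite -(mact_mone z) -NM mact_mmul Mz0 mact0. Qed.

Lemma eigen_neq0 (M N : hmat) z l :
  mmul N M = mone R -> z <> 0 -> mact M z = vscale z l -> l != 0.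
Proof.
move=> NM z0 Mz; apply: contra_not_neq (mact_neq0 NM z0) => l0.
by rewrite Mz l0 vscale0.
Qed.

Lemma eigen_linv (M N : hmat) z l :
  mmul N M = mone R -> l != 0 -> mact M z = vscale z l -> mact N z = vscale z l^-1.
Proof.
move=> NM l0 Mz; have : mact N (mact M z) = z by rewrite -mact_mmul NM mact_mone.
by rewrite Mz mact_vscale => NMz; rewrite -{2}NMz vscaleA mulrV // vscale1.
Qed.

Lemma eigen_vscale (M : hmat) z l mu :
  mu != 0 -> mact M z = vscale z l -> mact M (vscale z mu) = vscale (vscale z mu) (mu^-1 * l * mu).
Proof. by move=> mu0 Mz; rewrite mact_vscale Mz !vscaleA !mulrA mulrV // mul1r. Qed.

Lemma null_nz_vscale z a : null_nz z -> a != 0 -> null_nz (vscale z a).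
Proof.
move=> [z0 zz] a0; split; last by rewrite hform_vscalel hform_vscaler zz mulr0 mul0r.
move=> za0; have : vscale z a = vscale z 0 by rewrite vscale0 za0.
by move/(vscale_inj z0)/eqP; apply/negP.
Qed.

Lemma fixes_bd_same_line (A : hmat) p z :
  fixes_bd A p -> null_nz z -> same_line p z -> fixes_bd A z.
Proof.
move=> [_ [l Ap]] nz [mu ez]; split=> //.
have mu0 : mu != 0 by apply: contra_not_neq nz.1 => mu0; rewrite ez mu0 vscale0.
by exists (mu^-1 * l * mu); rewrite ez; apply: eigen_vscale.
Qed.

Lemma frame_eigenvalues (A : hmat) p q l k : form_preserving A -> hform p q = 1 ->
  mact A p = vscale p l -> mact A q = vscale q k -> qconj k * l = 1.
Proof.
by move=> fA pq Ap Aq; have := fA p q; rewrite Ap Aq hform_vscalel hform_vscaler pq mulr1.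
Qed.

Lemma not_same_line_hform (p q : hvec) : hform p p = 0 -> hform q p != 0 -> ~ same_line p q.
Proof. by move=> pp qp /(same_line_hform pp) /eqP; apply/negP. Qed.

(** * Hyperbolic elements *)

Section Hyperbolic.
Variable A : hmat.
Hypothesis hypA : hyperbolic A.

Lemma hyperbolic_third_fixed p q z : fixes_bd A p -> fixes_bd A q -> fixes_bd A z ->
  ~ same_line p q -> same_line p z \/ same_line q z.
Proof.
have [z1 [z2 [_ [_ [_ fix12]]]]] := hypA.
move=> fp fq fz npq; have sym v w : fixes_bd A w -> same_line v w -> same_line w v.
  by move=> [[w0 _] _]; exact: same_line_sym.
case: (fix12 p fp) (fix12 q fq) (fix12 z fz) => hp [] hq [] hz;
  first [ by exfalso; apply: npq; exact: same_line_trans (sym _ _ fp hp) hq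
        | by left; exact: same_line_trans (sym _ _ fp hp) hz
        | by right; exact: same_line_trans (sym _ _ fq hq) hz ].
Qed.

Lemma hyperbolic_fixedE p q : fixes_bd A p -> fixes_bd A q -> ~ same_line p q ->
  forall z, fixes_bd A z <-> null_nz z /\ (same_line p z \/ same_line q z).
Proof.
move=> fp fq npq z; split=> [fz|[nz [pz|qz]]].
- by split; [case: fz | exact: hyperbolic_third_fixed fp fq fz npq].
- exact: fixes_bd_same_line fp nz pz.
- exact: fixes_bd_same_line fq nz qz.
Qed.

Lemma hyperbolic_frame p : fixes_bd A p -> exists q, fixes_bd A q /\ hform p q = 1.
Proof.
move=> fp; have [np _] := fp.
suff [a fa ap] : exists2 a, fixes_bd A a & hform a p != 0.
  have c0 : (hform a p)^-1 != 0 by rewrite invr_eq0.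
  exists (vscale a (hform a p)^-1); split.
    by apply: fixes_bd_same_line fa (null_nz_vscale fa.1 c0) _; exists (hform a p)^-1.
  by rewrite hform_vscaler [hform p a]hform_sym -qconjM mulrV // qconj1.
have [z1 [z2 [f1 [f2 [n12 _]]]]] := hypA.
have [z1p|] := eqVneq (hform z1 p) 0; last by exists z1.
have [z2p|] := eqVneq (hform z2 p) 0; last by exists z2.
exfalso; apply: n12; apply: same_line_trans (null_orthogonal_same_line np z2p).
by apply: same_line_sym (null_orthogonal_same_line np z1p); case: f1 => [[]].
Qed.

Lemma hyperbolic_eigen_norm p l : form_preserving A -> fixes_bd A p ->
  mact A p = vscale p l -> qnorm l != 1.
Proof.
move=> fA fp Ap; apply/eqP => l1.
have [q [fq pq]] := hyperbolic_frame fp.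
have [[_ pp] _] := fp; have [[_ qq] [k Aq]] := fq.
have kl : k = l.
  have kl1 := frame_eigenvalues fA pq Ap Aq.
  rewrite -[k]qconjK -[l]qconjK; congr qconj.
  by rewrite -[qconj k]mulr1 -(qnorm1_mul_qconj l1) mulrA kl1 mul1r.
have [y [y0 py yl]] := exists_pure_commuting l.
pose u := p + vscale q y.
have up : hform u p = y.
  by rewrite hformDl hform_vscalel [hform q p]hform_sym pq qconj1 pp mul1r add0r.
have uq : hform u q = 1 by rewrite hformDl hform_vscalel pq qq mul0r addr0.
have fu : fixes_bd A u.
  split; [split|exists l].
  - by move=> u0; move: uq; rewrite u0 hform0l => /eqP; rewrite eq_sym oner_eq0.
  - by rewrite {2}/u hformDr hform_vscaler up uq py mulr1 subrr.
  - by rewrite mactD mact_vscale Ap Aq kl vscaleA -yl vscaleDl vscaleA.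
have npq : ~ same_line p q.
  by apply: not_same_line_hform pp _; rewrite hform_sym pq qconj1 oner_eq0.
case: (hyperbolic_third_fixed fp fq fu npq).
- by move/(same_line_hform pp); rewrite up; apply/eqP.
- by move/(same_line_hform qq); rewrite uq; apply/eqP; rewrite oner_eq0.
Qed.

End Hyperbolic.

(** * Reversing involutions *)

Lemma pm_eq_mact (M N : hmat) :
  pm_eq M N -> exists2 e : quat, e * e = 1 & forall u, mact M u = vscale (mact N u) e.
Proof.
case=> ->; [exists 1 | exists (-1)]; rewrite ?mulr1 ?mulrNN ?mulr1 // => u.
  by rewrite vscale1.
exact: mact_mopp.
Qed.

Section Reversal.
Variables G Gi A Ai : hmat.
Hypotheses (GGi : is_inv G Gi) (fG : form_preserving G) (AAi : is_inv A Ai).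
Hypothesis revA : pm_eq (mmul (mmul G A) Gi) Ai.

Lemma reversal_eigen p l : p <> 0 -> mact A p = vscale p l ->
  exists2 l', qnorm l' = (qnorm l)^-1 & mact A (mact G p) = vscale (mact G p) l'.
Proof.
move=> p0 Ap; have [e ee GAGi] := pm_eq_mact revA.
have e0 : e != 0 by apply/eqP => e0; move: ee; rewrite e0 mul0r => /eqP; rewrite eq_sym oner_eq0.
have l0 := eigen_neq0 AAi.2 p0 Ap.
have AiGp : mact Ai (mact G p) = vscale (mact G p) (l * e).
  have GiG : mact Gi (mact G p) = p by rewrite -mact_mmul GGi.2 mact_mone.
  have := GAGi (mact G p); rewrite !mact_mmul GiG Ap mact_vscale.
  by move=> GpAi; rewrite -[mact Ai _]vscale1 -ee -vscaleA -GpAi vscaleA.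
exists (l * e)^-1; last exact: eigen_linv AAi.1 (qmulf_neq0 l0 e0) AiGp.
have ne : qnorm e = 1.
  have := qnorm_ge0 e; have := congr1 qnorm ee; rewrite qnormM qnorm1; nra.
by rewrite qnormV qnormM ne mulr1.
Qed.

Lemma reversal_fixes_bd p : fixes_bd A p -> fixes_bd A (mact G p).
Proof.
move=> [[p0 pp] [l Ap]]; have [l' _ AGp] := reversal_eigen p0 Ap.
by split; [split; [exact: mact_neq0 GGi.2 p0 | rewrite fG] | exists l'].
Qed.

Lemma reversal_moves_fixed p : form_preserving A -> hyperbolic A -> fixes_bd A p ->
  ~ same_line p (mact G p).
Proof.
move=> fA hA fp [mu Gp]; have [[p0 _] [l Ap]] := fp.
have [l' nl' AGp] := reversal_eigen p0 Ap.
have Gp0 := mact_neq0 GGi.2 p0.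
have mu0 : mu != 0 by apply: contra_not_neq Gp0 => mu0; rewrite Gp mu0 vscale0.
have : l' = mu^-1 * l * mu by apply: (vscale_inj Gp0); rewrite -AGp Gp; exact: eigen_vscale.
move/(congr1 qnorm); rewrite qnorm_conjg // nl' => nl.
have nl0 : qnorm l != 0 by rewrite qnorm_eq0; exact: eigen_neq0 AAi.2 p0 Ap.
have nl2 : qnorm l * qnorm l = 1 by rewrite -{1}nl mulVf.
by move/eqP: (hyperbolic_eigen_norm hA fA fp Ap); apply; have := qnorm_ge0 l; nra.
Qed.

End Reversal.

Lemma reversible_same_fixed (A B : hmat) : Sp11 A -> Sp11 B -> hyperbolic A -> hyperbolic B ->
  (exists z, fixes_bd A z /\ fixes_bd B z) ->
  strongly_doubly_reversible A B -> forall z, fixes_bd A z <-> fixes_bd B z.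
Proof.
move=> [_ fA] [_ fB] hA hB [z0 [fAz0 fBz0]].
move=> [G [Gi [Ai [Bi [[_ fG] [GGi [AAi [BBi [_ [revA revB]]]]]]]]]] z.
have nsl := reversal_moves_fixed GGi AAi revA fA hA fAz0.
apply: iff_trans (hyperbolic_fixedE hA fAz0 (reversal_fixes_bd GGi fG AAi revA fAz0) nsl z) _.
exact: iff_sym (hyperbolic_fixedE hB fBz0 (reversal_fixes_bd GGi fG BBi revB fBz0) nsl z).
Qed.

Section Swap.
Variables (z1 z2 : hvec) (x : quat).
Hypotheses (z1_null : hform z1 z1 = 0) (z2_null : hform z2 z2 = 0) (z12 : hform z1 z2 = 1).
Hypotheses (x0 : x != 0) (px : pure x).

Definition swap_mx := frame_mx z1 z2 (vscale z2 x) (vscale z1 (- x^-1)).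

Lemma swap_z1 : mact swap_mx z1 = vscale z2 x. Proof. exact: frame_mx_z1. Qed.
Lemma swap_z2 : mact swap_mx z2 = vscale z1 (- x^-1). Proof. exact: frame_mx_z2. Qed.

Lemma swap_sqr : mmul swap_mx swap_mx = mopp (mone R).
Proof.
apply: (frame_mx_ext z1_null z2_null z12); rewrite mact_mmul mact_mopp mact_mone.
  by rewrite swap_z1 mact_vscale swap_z2 vscaleA mulNr mulVr.
by rewrite swap_z2 mact_vscale swap_z1 vscaleA mulrN mulrV.
Qed.

Lemma swap_inv : is_inv swap_mx (mopp swap_mx).
Proof.
have GG u : mact swap_mx (mact swap_mx u) = vscale u (-1).
  by rewrite -mact_mmul swap_sqr mact_mopp mact_mone.
have NN u : vscale (vscale u (-1)) (-1) = u by rewrite vscaleA mulrNN mulr1 vscale1.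
by split; apply: hmatP => u; rewrite mact_mmul mact_mopp ?mact_vscale GG NN mact_mone.
Qed.

Lemma swap_Sp11 : Sp11 swap_mx.
Proof.
split; first by exists (mopp swap_mx); exact: swap_inv.
apply: (frame_form_preserving z1_null z2_null z12);
  rewrite ?swap_z1 ?swap_z2 hform_vscalel hform_vscaler ?z1_null ?z2_null ?mulr0 ?mul0r //.
by rewrite frame_z21 // mulr1 qconjN qconjV px invrN opprK mulVr.
Qed.

Lemma swap_reverses (A Ai : hmat) l k : form_preserving A -> is_inv A Ai ->
  mact A z1 = vscale z1 l -> mact A z2 = vscale z2 k -> x * l = qconj l * x ->
  mmul (mmul swap_mx A) (mopp swap_mx) = Ai.
Proof.
move=> fA AAi Az1 Az2 xl; have kl := frame_eigenvalues fA z12 Az1 Az2.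
have l0 := eigen_neq0 AAi.2 (frame_z1_neq0 z12) Az1.
have k0 := eigen_neq0 AAi.2 (frame_z1_neq0 (frame_z21 z12)) Az2.
have k_def : k = (qconj l)^-1.
  apply: (@qmulI (qconj l)); first by rewrite qconj_eq0.
  by rewrite mulrV ?qunitE ?qconj_eq0 // -[qconj l * k]qconjK qconjM qconjK kl qconj1.
apply: (frame_mx_ext z1_null z2_null z12); rewrite !mact_mmul mact_mopp.
  rewrite swap_z1 !mact_vscale Az2 !mact_vscale swap_z2 !vscaleA.
  rewrite (eigen_linv AAi.2 l0 Az1); congr vscale.
  by rewrite k_def -(reversing_inv x0 l0 xl) !mulrN !mulNr opprK mulr1 mulrA.
rewrite swap_z2 !mact_vscale Az1 !mact_vscale swap_z1 !vscaleA.
rewrite (eigen_linv AAi.2 k0 Az2); congr vscale.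
by rewrite k_def invrK !mulNr mulrN opprK mulr1 mulrA xl mulrK.
Qed.

End Swap.

Lemma same_fixed_reversible (A B : hmat) : Sp11 A -> Sp11 B -> hyperbolic A ->
  (forall z, fixes_bd A z <-> fixes_bd B z) -> strongly_doubly_reversible A B.
Proof.
move=> [[Ai AAi] fA] [[Bi BBi] fB] hA AB.
have [z1 [_ [fz1 _]]] := hA; have [z2 [fz2 z12]] := hyperbolic_frame hA fz1.
have [[_ z1_null] [l Az1]] := fz1; have [[_ z2_null] [k Az2]] := fz2.
have [_ [b Bz1]] := (AB z1).1 fz1; have [_ [d Bz2]] := (AB z2).1 fz2.
have [x [x0 px xl xb]] := exists_pure_reversing l b.
exists (swap_mx z1 z2 x), (mopp (swap_mx z1 z2 x)), Ai, Bi.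
split; first exact: swap_Sp11.
split; first exact: swap_inv.
split=> //; split=> //; split; first by right; exact: swap_sqr.
by split; left; [exact: swap_reverses fA AAi Az1 Az2 xl | exact: swap_reverses fB BBi Bz1 Bz2 xb].
Qed.

End Sp11.

Theorem proposition6p1 (R : realType) (A B : hmat R) :
  Sp11 A -> Sp11 B -> hyperbolic A -> hyperbolic B ->
  (exists z, fixes_bd A z /\ fixes_bd B z) ->
  (strongly_doubly_reversible A B <->
   (forall z, fixes_bd A z <-> fixes_bd B z)).
Proof.
move=> sA sB hA hB common; split; first exact: reversible_same_fixed.
exact: same_fixed_reversible.
Qed.
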